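(* Let $1\le p_1\le\cdots\le p_d\le n$ be integers and let $G_0=G_0(p_1,\ldots,p_d)$ be the $d$-uniform $d$-partite hypergraph with vertex classes $V_1,\ldots,V_d$, each identified with $[n]$, in which a $d$-tuple $(x_1,\ldots,x_d)\in[n]^d$ is a non-edge if and only if $x_{(i)}\ge p_i$ for every $1\le i\le d$. Then $W_n(p_1,\ldots,p_d)\ge \|G_0\|$, where $\|G_0\|$ is the number of edges of $G_0$; i.e., every weakly $K^d_{p_1,\ldots,p_d}$-saturated $d$-uniform $d$-partite hypergraph with $n$ vertices in each class has at least $\|G_0\|$ edges.
   Context: A $d$-uniform $d$-partite hypergraph has vertex classes $V_1,\ldots,V_d$ and edges that contain exactly one vertex from each class; only such $d$-sets are considered as possible edges. A copy of $K^d_{p_1,\ldots,p_d}$ in $H$ is a permutation $\pi:[d]\to[d]$ together with sets $S_i\subseteq V_i$, $|S_i|=p_{\pi(i)}$, such that all $d$-sets with one vertex from each $S_i$ are edges. $H$ is weakly $K^d_{p_1,\ldots,p_d}$-saturated if its non-edges can be added one at a time in some order so that each added edge creates a new copy of $K^d_{p_1,\ldots,p_d}$ containing that edge. $W_n(p_1,\ldots,p_d)$ is the minimum number of edges in a weakly $K^d_{p_1,\ldots,p_d}$-saturated such hypergraph with $n$ vertices in each class. For $x\in[n]^d$, $x_{(i)}$ is the $i$-th smallest entry of $x$ sorted with repetitions. *)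

From mathcomp Require Import all_boot all_fingroup.
Set Implicit Arguments. Unset Strict Implicit. Unset Printing Implicit Defensive.

(* A d-uniform d-partite hypergraph with vertex classes V_1..V_d, each
   identified with [n] (represented by 'I_n, value k standing for k+1). *)
Definition dtuple (d n : nat) := {ffun 'I_d -> 'I_n}.
Definition dhgraph (d n : nat) := {set dtuple d n}.

Definition copy_containing (d n : nat) (p : 'I_d -> nat)
    (E : dhgraph d n) (e : dtuple d n) : Prop :=
  exists (pi : 'S_d) (S : 'I_d -> {set 'I_n}),
    [/\ forall i, #|S i| = p (pi i),
        forall x : dtuple d n, (forall i, x i \in S i) -> x \in E
      & forall i, e i \in S i].

(* Weak saturation: the non-edges of E can be listed (each exactly once) in an
   order s such that adding each one, after those before it, creates a copy
   of K^d_p containing it (such a copy is necessarily new). *)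
Definition weakly_saturated (d n : nat) (p : 'I_d -> nat) (E : dhgraph d n)
    : Prop :=
  exists s : seq (dtuple d n),
    [/\ uniq s,
        forall x, (x \in s) = (x \notin E)
      & forall s1 x s2, s = s1 ++ x :: s2 ->
          copy_containing p (E :|: [set y in x :: s1]) x].

(* x_(i) for 1-based i: the i-th smallest entry of x (entries in [n],
   1-based), sorted with repetitions.  Here i : 'I_d is 0-based, so
   order_stat x i is x_(i+1). *)
Definition order_stat (d n : nat) (x : dtuple d n) (i : 'I_d) : nat :=
  nth 0 (sort leq [seq (nat_of_ord (x j)).+1 | j <- enum 'I_d]) i.

Definition G0 (d n : nat) (p : 'I_d -> nat) : dhgraph d n :=
  [set x : dtuple d n | ~~ [forall i, p i <= order_stat x i]].
Arguments G0 : clear implicits.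

(* Polynomial method.  For a box S = S_1 x ... x S_d, the iterated divided
   difference D_S f = sum_{x in S} f x / prod_j prod_{t in S_j, t <> x_j} (x_j - t)
   kills every monomial x^a having some a_j < |S_j| - 1.  When |S_j| = p_(pi j),
   a pigeonhole argument on order statistics shows that this covers every
   monomial x^a with a an edge of G0.  Hence a function f in the span V of
   these monomials is determined by its values on E whenever E is weakly
   saturated: each non-edge x added along the saturating order lies in a box
   whose other points are already edges, and D_S f = f x * (nonzero weight).
   Since monomials are linearly independent on the grid, restriction to E is
   injective on V, so #|G0| = dim V <= #|E|. *)
From mathcomp Require Import all_boot all_fingroup all_algebra.
From mathcomp Require Import ring.
Set Implicit Arguments. Unset Strict Implicit. Unset Printing Implicit Defensive.
Import GRing.Theory Num.Theory.

Lemma card_ord_lt (d i : nat) : i <= d -> #|[set k : 'I_d | k < i]| = i.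
Proof.
move=> le_id.
have -> : [set k : 'I_d | k < i] = [set widen_ord le_id k | k : 'I_i].
  apply/setP => k; rewrite inE; apply/idP/imsetP => [ki|].
    by exists (Ordinal ki) => //; apply: val_inj.
  by case=> k' _ ->; rewrite /= ltn_ord.
by rewrite card_imset ?card_ord // => u v /(congr1 val) /= /val_inj.
Qed.

Lemma card_set_count (T : finType) (P : pred T) :
  #|[set j | P j]| = count P (enum T).
Proof.
rewrite cardE /enum_mem size_filter count_filter.
by apply: eq_count => j; rewrite !inE andbT.
Qed.

Section OrderStatistics.
Variables d n : nat.
Implicit Types x : dtuple d n.

Lemma leq_order_stat x (i : 'I_d) v :
  #|[set j | (x j).+1 < v]| <= i -> v <= order_stat x i.
Proof.
move=> small; rewrite leqNgt; apply/negP => lt_stat.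
set s := [seq (nat_of_ord (x j)).+1 | j <- enum 'I_d].
set t := sort leq s.
have t_sorted : sorted leq t by apply: sort_sorted; exact: leq_total.
have i_lt : i < size t by rewrite size_sort size_map size_enum_ord ltn_ord.
have prefix_lt : all (fun y => y < v) (take i.+1 t).
  apply/(all_nthP 0) => k; rewrite (size_takel i_lt) => k_le.
  rewrite nth_take //; apply: leq_ltn_trans lt_stat.
  by apply: (sorted_leq_nth leq_trans leqnn 0 t_sorted); rewrite ?inE // (leq_trans k_le).
have : i.+1 <= count (fun y => y < v) t.
  rewrite -(cat_take_drop i.+1 t) count_cat.
  move: prefix_lt; rewrite all_count => /eqP ->; rewrite (size_takel i_lt).
  exact: leq_addr.
have /seq.permP -> : perm_eq t s by rewrite /t perm_sort.
rewrite /s count_map -card_set_count => big.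
by have := leq_trans big small; rewrite ltnn.
Qed.

Lemma leq_order_stat_perm (p : 'I_d -> nat)
    (p_mono : forall i j : 'I_d, i <= j -> p i <= p j) (pi : 'S_d) x :
  (forall j, p (pi j) <= (x j).+1) -> forall i, p i <= order_stat x i.
Proof.
move=> px i; apply: leq_order_stat.
rewrite -(card_ord_lt (ltnW (ltn_ord i))) -(card_imset _ (@perm_inj _ pi)).
apply: subset_leq_card; apply/subsetP => k /imsetP [j]; rewrite inE => xj ->.
rewrite inE ltnNge; apply/negP => le_ij.
by have := leq_trans (p_mono _ _ le_ij) (px j); rewrite leqNgt xj.
Qed.

End OrderStatistics.

Local Open Scope ring_scope.

Lemma leq_of_mulmx_inj (F : fieldType) (k m : nat) (B : 'M[F]_(k, m)) :
  (forall v : 'rV_k, v *m B = 0 -> v = 0) -> (k <= m)%N.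
Proof.
move=> B_inj; apply: leq_trans (rank_leq_col B); rewrite row_leq_rank.
rewrite -kermx_eq0; apply/eqP/row_matrixP => i.
by rewrite row0; apply: B_inj; rewrite -row_mul mulmx_ker row0.
Qed.

Section DividedDifference.
Variable n : nat.
Implicit Types (S : {set 'I_n}) (h : 'I_n -> rat).

Definition ddiff_weight S (y : 'I_n) : rat :=
  \prod_(t in S :\ y) ((y : nat)%:R - (t : nat)%:R)^-1.

Definition ddiff S h : rat := \sum_(y in S) h y * ddiff_weight S y.

Lemma subr_nat_neq0 (y t : 'I_n) : y != t -> (y : nat)%:R - (t : nat)%:R != 0 :> rat.
Proof. by move=> ne_yt; rewrite subr_eq0 eqr_nat. Qed.

Lemma ddiff_weight_neq0 S y : ddiff_weight S y != 0.
Proof.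
apply/prodf_neq0 => t; rewrite in_setD1 => /andP[ty _].
by rewrite invr_eq0 subr_nat_neq0 // eq_sym.
Qed.

Lemma eq_ddiff S h1 h2 : h1 =1 h2 -> ddiff S h1 = ddiff S h2.
Proof. by move=> eq_h; apply: eq_bigr => y _; rewrite eq_h. Qed.

Lemma ddiffZD S c h1 h2 :
  ddiff S (fun y => c * h1 y + h2 y) = c * ddiff S h1 + ddiff S h2.
Proof.
rewrite /ddiff mulr_sumr -big_split /=.
by apply: eq_bigr => y _; rewrite mulrDl mulrA.
Qed.

Lemma ddiffZ S c h : ddiff S (fun y => c * h y) = c * ddiff S h.
Proof. by rewrite /ddiff mulr_sumr; apply: eq_bigr => y _; rewrite mulrA. Qed.

(* The factor (y - t) cancels the factor 1/(y - t) of each weight. *)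
Lemma ddiff_mul_subr S (t : 'I_n) h : t \in S ->
  ddiff S (fun y => ((y : nat)%:R - (t : nat)%:R) * h y) = ddiff (S :\ t) h.
Proof.
move=> tS; rewrite /ddiff (bigD1 t) //= subrr !mul0r add0r.
apply: eq_big => [y|y]; first by rewrite in_setD1 andbC.
move=> /andP[yS yt].
rewrite /ddiff_weight (bigD1 t) /=; last by rewrite in_setD1 tS eq_sym yt.
rewrite [_ * h y]mulrC -mulrA mulVKf ?subr_nat_neq0 //; congr (_ * _).
apply: eq_bigl => u; rewrite !in_setD1.
by case: (u != t); case: (u != y); case: (u \in S).
Qed.

Lemma ddiff1 k S : #|S| = k.+1 -> ddiff S (fun _ => 1) = (k == 0)%:R.
Proof.
elim: k S => [|k IH] S cardS.
  have /cards1P [t ->] : #|S| == 1%N by rewrite cardS.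
  by rewrite /ddiff big_set1 /ddiff_weight setDv big_set0 mul1r.
have /set0Pn [t0 t0S] : S != set0 by rewrite -card_gt0 cardS.
have card0 : #|S :\ t0| = k.+1 by rewrite (cardsD1 t0 S) t0S in cardS; case: cardS.
have /set0Pn [t1 t1S0] : S :\ t0 != set0 by rewrite -card_gt0 card0.
move: (t1S0); rewrite in_setD1 => /andP[t10 t1S].
have card1 : #|S :\ t1| = k.+1 by rewrite (cardsD1 t1 S) t1S in cardS; case: cardS.
(* t1 - t0 = (y - t0) - (y - t1), and each term removes one node *)
have : ddiff S (fun _ => (t1 : nat)%:R - (t0 : nat)%:R) = 0.
  rewrite (@eq_ddiff S _ (fun y => -1 * (((y : nat)%:R - (t1 : nat)%:R) * 1)
       + ((y : nat)%:R - (t0 : nat)%:R) * 1)); last by move=> y /=; ring.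
  by rewrite ddiffZD !ddiff_mul_subr // (IH _ card0) (IH _ card1) mulN1r addNr.
rewrite -[X in ddiff S (fun _ => X)]mulr1 ddiffZ => /eqP.
by rewrite mulf_eq0 (negbTE (subr_nat_neq0 t10)) => /eqP ->.
Qed.

Lemma ddiff_exp a S : (a < #|S|)%N ->
  ddiff S (fun y => (y : nat)%:R ^+ a) = (#|S| == a.+1)%:R.
Proof.
elim: a S => [|a IH] S cardS.
  rewrite (@eq_ddiff S _ (fun _ => 1)) ?expr0 //.
  by case: #|S| cardS (@ddiff1 #|S|.-1 S) => // k _ ->.
have /set0Pn [t0 t0S] : S != set0 by rewrite -card_gt0; apply: leq_trans cardS.
have card0 : #|S :\ t0| = #|S|.-1 by rewrite (cardsD1 t0 S) t0S.
rewrite (@eq_ddiff S _ (fun y => (t0 : nat)%:R * ((y : nat)%:R ^+ a)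
     + ((y : nat)%:R - (t0 : nat)%:R) * ((y : nat)%:R ^+ a))); last first.
  by move=> y; rewrite exprS; ring.
rewrite ddiffZD ddiff_mul_subr // IH ?IH ?card0.
- by rewrite (gtn_eqF cardS) mulr0 add0r; case: #|S| cardS.
- by rewrite -ltnS (ltn_predK cardS).
- exact: ltnW.
Qed.

End DividedDifference.

Section BoxDifference.
Variables d n : nat.
Implicit Types (a x : dtuple d n) (S : 'I_d -> {set 'I_n}) (f : dtuple d n -> rat).

Definition monomial a x : rat := \prod_j ((x j : nat)%:R) ^+ (a j).

Definition box_weight S x : rat := \prod_j ddiff_weight (S j) (x j).

Definition box_ddiff S f : rat := \sum_(x in family S) f x * box_weight S x.

Lemma box_ddiff_monomial S a :
  box_ddiff S (monomial a) = \prod_j ddiff (S j) (fun y => (y : nat)%:R ^+ a j).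
Proof.
rewrite /ddiff bigA_distr_big_dep /box_ddiff.
by apply: eq_bigr => x _; rewrite /monomial /box_weight -big_split.
Qed.

Lemma box_ddiff_sum k S (c : 'I_k -> rat) (g : 'I_k -> dtuple d n -> rat) :
  box_ddiff S (fun x => \sum_i c i * g i x) = \sum_i c i * box_ddiff S (g i).
Proof.
rewrite /box_ddiff; under eq_bigr do rewrite mulr_suml.
rewrite exchange_big; apply: eq_bigr => i _; rewrite mulr_sumr.
by apply: eq_bigr => x _; rewrite mulrA.
Qed.

Lemma box_ddiff_monomial_eq0 S a j :
  ((a j).+2 <= #|S j|)%N -> box_ddiff S (monomial a) = 0.
Proof.
move=> low_deg; rewrite box_ddiff_monomial (bigD1 j) //= ddiff_exp ?(ltnW low_deg) //.
by rewrite (gtn_eqF low_deg) mul0r.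
Qed.

Lemma box_ddiff_monomial_full S a :
  (forall j, #|S j| = (a j).+1) -> box_ddiff S (monomial a) = 1.
Proof.
by move=> cardS; rewrite box_ddiff_monomial big1 // => j _; rewrite ddiff_exp cardS ?eqxx.
Qed.

Lemma box_ddiff_single S f x0 : x0 \in family S ->
  (forall y, y \in family S -> y != x0 -> f y = 0) -> box_ddiff S f = 0 -> f x0 = 0.
Proof.
move=> x0S f0; rewrite /box_ddiff (bigD1 x0) //= big1 ?addr0; last first.
  by move=> y /andP[yS yx0]; rewrite f0 // mul0r.
move/eqP; rewrite mulf_eq0 => /orP[/eqP //|].
by rewrite prodf_seq_eq0 => /hasP[j _ /andP[_]]; rewrite (negbTE (ddiff_weight_neq0 _ _)).
Qed.

(* The boxes [0, a_j] of a coefficient a of maximal weight isolate it. *)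
Lemma monomials_independent k (e : 'I_k -> dtuple d n) (c : 'I_k -> rat) :
  injective e -> (forall x, \sum_i c i * monomial (e i) x = 0) -> c =1 (fun _ => 0).
Proof.
move=> e_inj vanish i0; apply/eqP; apply: contraT => ci0.
pose weight i := (\sum_j (e i j : nat))%N.
case: (@arg_maxnP _ i0 (fun i => c i != 0) weight ci0) => i1 ci1 i1_max.
pose T j : {set 'I_n} := [set y : 'I_n | (y < (e i1 j).+1)%N].
have cardT j : #|T j| = (e i1 j).+1 by rewrite card_ord_lt // ltn_ord.
have : box_ddiff T (fun x => \sum_i c i * monomial (e i) x) = 0.
  by rewrite /box_ddiff big1 // => x _; rewrite vanish mul0r.
rewrite box_ddiff_sum (bigD1 i1) //= box_ddiff_monomial_full // mulr1 big1.
  by rewrite addr0 => /eqP; rewrite (negbTE ci1).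
move=> i ne_i; have [->|ci] := eqVneq (c i) 0; first by rewrite mul0r.
have [j lt_j] : exists j, (e i j < e i1 j)%N.
  apply/existsP; apply: contraR ne_i; rewrite negb_exists => /forallP ge_e.
  have le_e j : (e i1 j <= e i j)%N by rewrite leqNgt ge_e.
  have : (\sum_j (e i j - e i1 j) = 0)%N.
    by rewrite sumnB //; apply/eqP; rewrite subn_eq0; exact: i1_max.
  move/eqP; rewrite sum_nat_eq0 => /forallP eq_e.
  apply/eqP/e_inj/ffunP => j; apply/val_inj/eqP.
  by rewrite eqn_leq le_e andbT -subn_eq0; apply: eq_e.
by rewrite (box_ddiff_monomial_eq0 (j := j)) ?mulr0 // cardT.
Qed.

Definition kills_boxes (p : 'I_d -> nat) f :=
  forall (pi : 'S_d) S, (forall i, #|S i| = p (pi i)) -> box_ddiff S f = 0.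

Lemma kills_boxes_G0_monomial (p : 'I_d -> nat)
    (p_mono : forall i j : 'I_d, (i <= j)%N -> (p i <= p j)%N) a :
  a \in G0 d n p -> kills_boxes p (monomial a).
Proof.
rewrite inE => /forallPn [i lt_stat] pi S cardS.
have [j low_deg] : exists j, ((a j).+2 <= #|S j|)%N.
  apply/existsP; apply: contraR lt_stat; rewrite negb_exists => /forallP high.
  apply: (leq_order_stat_perm p_mono (pi := pi)) => j.
  by rewrite -cardS -ltnS ltnNge high.
exact: box_ddiff_monomial_eq0 low_deg.
Qed.

Lemma kills_boxes_sum p k (c : 'I_k -> rat) (g : 'I_k -> dtuple d n -> rat) :
  (forall i, kills_boxes p (g i)) -> kills_boxes p (fun x => \sum_i c i * g i x).
Proof.
move=> g_kills pi S cardS; rewrite box_ddiff_sum big1 // => i _.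
by rewrite (g_kills i pi) ?mulr0.
Qed.

Lemma vanish_of_weakly_saturated p (E : dhgraph d n) f :
  weakly_saturated p E -> kills_boxes p f -> {in E, f =1 (fun _ => 0)} ->
  f =1 (fun _ => 0).
Proof.
move=> [s [_ s_nonedges s_copies]] f_kills fE.
have f_prefix r : (r <= size s)%N -> {in take r s, f =1 (fun _ => 0)}.
  elim: r => [|r IH] lt_r y; first by rewrite take0.
  rewrite (take_nth y lt_r) mem_rcons inE => /orP [/eqP ->|]; last exact: IH (ltnW lt_r) y.
  have := s_copies (take r s) (nth y s r) (drop r.+1 s).
  rewrite -drop_nth // cat_take_drop => /(_ erefl) [pi [S [cardS S_edges xS]]].
  apply: (@box_ddiff_single S); [exact/familyP | | exact: f_kills cardS].
  move=> z /familyP zS zx; have := S_edges z zS.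
  rewrite !inE (negbTE zx) /= => /orP [/fE //|]; exact: IH (ltnW lt_r) z.
move=> y; have [/fE //|] := boolP (y \in E); rewrite -s_nonedges => ys.
by apply: (f_prefix (size s)); rewrite ?take_size.
Qed.

End BoxDifference.

Local Close Scope ring_scope.

Theorem lemma2 (d n : nat) (p : 'I_d -> nat)
  (hp1 : forall i, 1 <= p i)
  (hpmono : forall i j : 'I_d, i <= j -> p i <= p j)
  (hpn : forall i, p i <= n) :
  forall E : dhgraph d n, weakly_saturated p E -> #|G0 d n p| <= #|E|.
Proof.
move=> E satE.
pose e (i : 'I_#|G0 d n p|) : dtuple d n := enum_val i.
pose q (j : 'I_#|E|) : dtuple d n := enum_val j.
pose B := (\matrix_(i, j) monomial (e i) (q j))%R.
apply: (@leq_of_mulmx_inj _ _ _ B) => v vB0.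
pose f x := (\sum_i v ord0 i * monomial (e i) x)%R.
have fE : {in E, f =1 (fun _ => 0%R)}.
  move=> y yE; move/matrixP: vB0 => /(_ ord0 (enum_rank_in yE y)).
  rewrite !mxE => <-; apply: eq_bigr => i _.
  by rewrite !mxE /q enum_rankK_in.
have f_kills : kills_boxes p f.
  by apply: kills_boxes_sum => i; apply: kills_boxes_G0_monomial; rewrite ?enum_valP.
have := monomials_independent (@enum_val_inj _ _) (vanish_of_weakly_saturated satE f_kills fE).
by move=> v0; apply/rowP => i; rewrite v0 mxE.
Qed.
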